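(* Let $A$ be an abelian $p$-group, $a\in A$ and $\varphi$ an endomorphism of $A$. (1) If $\varphi$ is inertial or left-inertial, then the cyclic $\mathbb{Z}[\varphi]$-submodule $\mathbb{Z}[\varphi]a$ of $A$ generated by $a$ is finite. (2) If $|X/X_{(\varphi)}|<\infty$ for all subgroups $X\le A$, then $|X^{(\varphi)}/X|<\infty$ for all subgroups $X\le A$. (3) If there is an integer $m\ge0$ with $|X/X_{(\varphi)}|\le p^m$ for all subgroups $X\le A$, then $|X^{(\varphi)}/X|\le p^{m^2}$ for all subgroups $X\le A$.
   Context: Abelian groups are written additively. An endomorphism $\varphi$ of $A$ is inertial if $(\varphi(X)+X)/X$ is finite for every subgroup $X\le A$, and left-inertial if $X/(X\cap\varphi(X))$ is finite for every $X\le A$. For $X\le A$, $X^{(\varphi)}=\mathbb{Z}[\varphi]X$ is the smallest $\varphi$-invariant subgroup containing $X$, and $X_{(\varphi)}$ is the largest $\varphi$-invariant subgroup contained in $X$. *)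

(* Abelian groups are zmodTypes; subgroups are Prop-valued
   predicates closed under 0 and subtraction; endomorphisms are additive maps. *)
From mathcomp Require Import all_boot all_algebra.
Set Implicit Arguments. Unset Strict Implicit. Unset Printing Implicit Defensive.
Import GRing.Theory.
Local Open Scope ring_scope.

Section Defs.
Variable A : zmodType.

Definition subgroup (X : A -> Prop) : Prop :=
  X 0 /\ forall x y, X x -> X y -> X (x - y).

Definition p_group (p : nat) : Prop :=
  forall a : A, exists n : nat, a *+ (p ^ n)%N = 0.

Definition img (phi : A -> A) (X : A -> Prop) : A -> Prop :=
  fun y => exists x, X x /\ y = phi x.
Definition sumg (X Y : A -> Prop) : A -> Prop :=
  fun z => exists x y, X x /\ Y y /\ z = x + y.
Definition capg (X Y : A -> Prop) : A -> Prop := fun z => X z /\ Y z.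

Definition invariant (phi : A -> A) (Y : A -> Prop) : Prop :=
  forall y, Y y -> Y (phi y).

(* X^(phi) = Z[phi]X : smallest phi-invariant subgroup containing X *)
Definition inv_closure (phi : A -> A) (X : A -> Prop) : A -> Prop :=
  fun a => forall Y, subgroup Y -> invariant phi Y ->
             (forall x, X x -> Y x) -> Y a.

Definition inv_core (phi : A -> A) (X : A -> Prop) : A -> Prop :=
  fun a => exists Y, [/\ subgroup Y, invariant phi Y,
                        (forall y, Y y -> X y) & Y a].

(* |X / Y| <= N : any family of elements of X pairwise incongruent modulo Y
   has at most N members (the cosets of (X cap Y) in X number at most N). *)
Definition quot_card_le (X Y : A -> Prop) (N : nat) : Prop :=
  forall (n : nat) (f : nat -> A),
    (forall i, (i < n)%N -> X (f i)) ->
    (forall i j, (i < n)%N -> (j < n)%N -> Y (f i - f j) -> i = j) ->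
    (n <= N)%N.

Definition quot_finite (X Y : A -> Prop) : Prop := exists N, quot_card_le X Y N.

Definition finite_set (S : A -> Prop) : Prop :=
  exists s : seq A, forall x, S x -> x \in s.

Definition inertial (phi : A -> A) : Prop :=
  forall X, subgroup X -> quot_finite (sumg (img phi X) X) X.

Definition left_inertial (phi : A -> A) : Prop :=
  forall X, subgroup X -> quot_finite X (capg X (img phi X)).

End Defs.

From Pilot Require Import Defs.
From mathcomp Require Import all_boot all_algebra zify.
From Stdlib Require Import ClassicalEpsilon.
Set Implicit Arguments. Unset Strict Implicit. Unset Printing Implicit Defensive.
Import GRing.Theory.
Local Open Scope ring_scope.

(* (1) Let [T = Z[phi] a], spanned by the [a_i = phi^i a]. If some [a_d] has a
   relation modulo [pT] with coefficient prime to [p] over [a_0, ..., a_(d-1)],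
   then [T = <a_0, ..., a_(d-1)> + p^k T] for every [k], and [p^k T = 0] for
   large [k], so [T] is finite. Otherwise the [a_i] are independent modulo
   [pT]. In the subgroup [E] of combinations whose odd-index coefficients are
   divisible by [p], the [a_(2i+1) = phi a_(2i)] are then pairwise incongruent
   modulo [E], against inertiality, and the [a_(2i)] are pairwise incongruent
   modulo [phi E], against left inertiality.
   (2) [x |-> phi x + X] maps [X / X_(phi)] onto [(phi X + X) / X], so [phi] is
   inertial and every [Z[phi] r] is finite by (1); and [X^(phi)] lies in
   [X_(phi) + sum_(r in L) Z[phi] r] for a finite transversal [L] of
   [X_(phi)] in [X].
   (3) Let [X_k = X + phi X + ... + phi^k X]. Then [|X_(k+1) / X_k| <= p^m], so
   [|X_m / X| <= p^(m^2)]. If [X_m] were not invariant, some [x] in [X] would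
   have [phi^(m+1) x] outside [X_m]; the [p^(m+1)] combinations of
   [x, ..., phi^m x] with coefficients in [[0, p)] would then be pairwise
   incongruent modulo the core of [X_m], against [|X_m / (X_m)_(phi)| <= p^m].
   Hence [X^(phi) = X_m]. *)

Section Subgroups.
Variable A : zmodType.
Implicit Types X Y : A -> Prop.

Lemma subgroup0 X : subgroup X -> X 0. Proof. by case. Qed.

Lemma subgroupB X x y : subgroup X -> X x -> X y -> X (x - y).
Proof. by case=> _; apply. Qed.

Lemma subgroupN X x : subgroup X -> X x -> X (- x).
Proof. by move=> sX Xx; rewrite -sub0r; apply: subgroupB => //; apply: subgroup0. Qed.

Lemma subgroupD X x y : subgroup X -> X x -> X y -> X (x + y).
Proof. by move=> sX Xx Xy; rewrite -[y]opprK; apply: subgroupB => //; apply: subgroupN. Qed.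

Lemma subgroupMn X x n : subgroup X -> X x -> X (x *+ n).
Proof.
move=> sX Xx; elim: n => [|n IH]; first by rewrite mulr0n; apply: subgroup0.
by rewrite mulrS; apply: subgroupD.
Qed.

Lemma subgroupMz X x z : subgroup X -> X x -> X (x *~ z).
Proof.
move=> sX Xx; case: z => n /=; first exact: subgroupMn.
by apply: subgroupN => //; apply: subgroupMn.
Qed.

Lemma subgroup_sum X n (F : nat -> A) :
  subgroup X -> (forall i, (i < n)%N -> X (F i)) -> X (\sum_(i < n) F i).
Proof.
move=> sX XF; apply: (big_ind X) => [|x y|i _]; first exact: subgroup0.
  exact: subgroupD.
exact: XF.
Qed.

Lemma sumg_subgroup X Y : subgroup X -> subgroup Y -> subgroup (sumg X Y).
Proof.
move=> sX sY; split.
  by exists 0, 0; rewrite addr0; split; [apply: subgroup0|split; [apply: subgroup0|]].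
move=> _ _ [x1 [y1 [X1 [Y1 ->]]]] [x2 [y2 [X2 [Y2 ->]]]].
exists (x1 - x2), (y1 - y2); split; [exact: subgroupB|split; [exact: subgroupB|]].
by rewrite opprD addrACA.
Qed.

Lemma finite_sumg X Y : finite_set X -> finite_set Y -> finite_set (sumg X Y).
Proof.
move=> [s Xs] [t Yt]; exists [seq x + y | x <- s, y <- t].
by move=> _ [x [y [Xx [Yy ->]]]]; apply: allpairs_f; [apply: Xs|apply: Yt].
Qed.

Lemma subB_subB_add (a b c d : A) : a - c - (b - d) + (c - d) = a - b.
Proof. by rewrite opprB -addrA (addrC (d - b)) -(addrA c) addKr -addrA addKr. Qed.

End Subgroups.

Lemma choice_below (T : Type) (x0 : T) (P : nat -> T -> Prop) n :
  (forall i, (i < n)%N -> exists x, P i x) ->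
  exists g : nat -> T, forall i, (i < n)%N -> P i (g i).
Proof.
move=> exP.
have exP' i : exists x, (i < n)%N -> P i x.
  by case: (ltnP i n) => [/exP [x Px]|_]; [exists x|exists x0].
exists (fun i => proj1_sig (constructive_indefinite_description _ (exP' i))).
move=> i lt_i_n.
exact: (proj2_sig (constructive_indefinite_description _ (exP' i)) lt_i_n).
Qed.

Lemma leq_of_inj_in n m (h : nat -> nat) :
  (forall i, (i < n)%N -> (h i < m)%N) ->
  (forall i j, (i < n)%N -> (j < n)%N -> h i = h j -> i = j) -> (n <= m)%N.
Proof.
move=> hm hinj.
have uniq_h : uniq (map h (iota 0 n)).
  rewrite map_inj_in_uniq ?iota_uniq // => i j; rewrite !mem_iota /= !add0n.
  exact: hinj.
have := uniq_leq_size uniq_h (s2 := iota 0 m); rewrite size_map !size_iota; apply.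
by move=> y /mapP [i]; rewrite mem_iota /= add0n => hi ->; rewrite mem_iota /= add0n hm.
Qed.

Section QuotientCount.
Variable A : zmodType.
Implicit Types X Y Z W C : A -> Prop.

Lemma quot_card_le_leq Z Y N N' :
  (N <= N')%N -> quot_card_le Z Y N -> quot_card_le Z Y N'.
Proof. by move=> leNN' ZY n f Zf injf; exact: leq_trans (ZY n f Zf injf) leNN'. Qed.

Lemma quot_card_le_sub Z Z' Y N :
  (forall z, Z' z -> Z z) -> quot_card_le Z Y N -> quot_card_le Z' Y N.
Proof. by move=> sZ'Z ZY n f Z'f; apply: ZY => i lt_i_n; apply/sZ'Z/Z'f. Qed.

Lemma quot_card_le_cover Z X (L : seq A) : subgroup X ->
  (forall z, Z z -> exists2 w, w \in L & X (z - w)) -> quot_card_le Z X (size L).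
Proof.
move=> sX coverL n f Zf injf.
have [g Hg] := choice_below 0 (P := fun i w => w \in L /\ X (f i - w)) (n := n)
  (fun i hi => let: ex_intro2 w h1 h2 := coverL _ (Zf i hi) in ex_intro _ w (conj h1 h2)).
apply: (leq_of_inj_in (h := fun i => index (g i) L)).
  by move=> i hi; rewrite index_mem; case: (Hg i hi).
move=> i j hi hj eq_idx; apply: injf => //.
have eq_g : g i = g j.
  by rewrite -(nth_index 0 (proj1 (Hg i hi))) eq_idx nth_index //; case: (Hg j hj).
have -> : f i - f j = (f i - g i) - (f j - g j) by rewrite eq_g opprB addrA subrK.
by apply: subgroupB => //; [case: (Hg i hi) | case: (Hg j hj)].
Qed.

Definition incongruent_seq Z C (s : seq A) :=
  (forall w, w \in s -> Z w) /\
  forall i j, (i < size s)%N -> (j < size s)%N -> C (nth 0 s i - nth 0 s j) -> i = j.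

Lemma incongruent_seq_size Z C N s :
  quot_card_le Z C N -> incongruent_seq Z C s -> (size s <= N)%N.
Proof.
by move=> ZC [sZ injs]; apply: (ZC _ (nth 0 s)) => // i hi; apply/sZ/mem_nth.
Qed.

Lemma incongruent_seq_cons Z C s : subgroup C -> incongruent_seq Z C s ->
  ~ (forall z, Z z -> exists2 w, w \in s & C (z - w)) ->
  exists z, incongruent_seq Z C (z :: s).
Proof.
move=> sC [sZ injs] not_cover.
have [z [Zz nz]] : exists z, Z z /\ ~ exists2 w, w \in s & C (z - w).
  apply: NNPP => nex; apply: not_cover => z Zz; apply: NNPP => nw; apply: nex.
  by exists z.
exists z; split.
  by move=> w; rewrite in_cons => /orP [/eqP ->|]; [|apply: sZ].
case=> [|i] [|j] //= hi hj Cij.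
- by case: nz; exists (nth 0 s j); rewrite ?mem_nth.
- case: nz; exists (nth 0 s i); rewrite ?mem_nth //.
  by rewrite -opprB; apply: subgroupN.
- by congr S; apply: injs.
Qed.

(* Extending an incongruent sequence greedily must stop before its size
   exceeds [N]; the sequence reached is then a transversal. *)
Lemma exists_transversal Z C N : subgroup C -> quot_card_le Z C N ->
  exists L : seq A, [/\ (size L <= N)%N, (forall w, w \in L -> Z w) &
     forall z, Z z -> exists2 w, w \in L & C (z - w)].
Proof.
move=> sC ZC.
suff ext k s : incongruent_seq Z C s -> (N - size s <= k)%N -> exists L : seq A,
    [/\ (size L <= N)%N, (forall w, w \in L -> Z w) &
     forall z, Z z -> exists2 w, w \in L & C (z - w)].
  by apply: (ext N [::]); [split=> // i j|rewrite subn0].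
elim: k s => [|k IH] s inc_s hk;
  (case: (classic (forall z, Z z -> exists2 w, w \in s & C (z - w))) => cover;
   [by exists s; split=> //; [exact: incongruent_seq_size inc_s|case: inc_s]|]);
  have [z inc_zs] := incongruent_seq_cons sC inc_s cover;
  have /= := incongruent_seq_size ZC inc_zs.
  by move: hk; lia.
by move=> hz; apply: (IH _ inc_zs) => /=; lia.
Qed.

Lemma quot_card_le_mul Z Y X N1 N2 : subgroup Y -> subgroup X ->
  quot_card_le Z Y N1 -> quot_card_le Y X N2 -> quot_card_le Z X (N1 * N2).
Proof.
move=> sY sX ZY YX.
have [L1 [size1 _ cover1]] := exists_transversal sY ZY.
have [L2 [size2 _ cover2]] := exists_transversal sX YX.
apply: (quot_card_le_leq (N := size [seq w1 + w2 | w1 <- L1, w2 <- L2])).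
  by rewrite size_allpairs leq_mul.
apply: quot_card_le_cover => // z Zz.
have [w1 L1w1 Yw1] := cover1 z Zz; have [w2 L2w2 Xw2] := cover2 _ Yw1.
by exists (w1 + w2); [apply: allpairs_f | rewrite opprD addrA].
Qed.

Lemma quot_card_le_transfer Z Y W C N (R : A -> A -> Prop) :
  quot_card_le W C N ->
  (forall y, Z y -> exists x, W x /\ R y x) ->
  (forall y y' x x', R y x -> R y' x' -> C (x - x') -> Y (y - y')) ->
  quot_card_le Z Y N.
Proof.
move=> WC exR RC n f Zf injf.
have [g Hg] := choice_below 0 (P := fun i x => W x /\ R (f i) x) (n := n)
  (fun i hi => exR _ (Zf i hi)).
apply: (WC n g); first by move=> i hi; case: (Hg i hi).
move=> i j hi hj Cg; apply: injf => //.
by apply: (RC _ _ (g i) (g j)) => //; [case: (Hg i hi)|case: (Hg j hj)].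
Qed.

End QuotientCount.

Section Invariance.
Variable A : zmodType.
Variable phi : {additive A -> A}.
Implicit Types X Y : A -> Prop.

Lemma img_subgroup Y : subgroup Y -> subgroup (img phi Y).
Proof.
move=> sY; split; first by exists 0; split; [apply: subgroup0|rewrite raddf0].
move=> _ _ [x [Yx ->]] [y [Yy ->]].
by exists (x - y); split; [apply: subgroupB|rewrite raddfB].
Qed.

Lemma sumg_invariant X Y :
  Defs.invariant phi X -> Defs.invariant phi Y -> Defs.invariant phi (sumg X Y).
Proof.
move=> iX iY _ [x [y [Xx [Yy ->]]]]; exists (phi x), (phi y).
by rewrite raddfD; split; [apply: iX|split; [apply: iY|]].
Qed.

Lemma iter_raddf0 n : iter n phi 0 = 0.
Proof. by elim: n => [|n IH] //=; rewrite IH raddf0. Qed.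

Lemma iter_raddfB n (u v : A) : iter n phi (u - v) = iter n phi u - iter n phi v.
Proof. by elim: n => [|n IH] //=; rewrite IH raddfB. Qed.

Lemma iter_raddfD n (u v : A) : iter n phi (u + v) = iter n phi u + iter n phi v.
Proof. by elim: n => [|n IH] //=; rewrite IH raddfD. Qed.

Lemma iter_raddfMz n (u : A) z : iter n phi (u *~ z) = iter n phi u *~ z.
Proof. by elim: n => [|n IH] //=; rewrite IH raddfMz. Qed.

Lemma inv_closure_sub X x : X x -> inv_closure phi X x.
Proof. by move=> Xx Y _ _; apply. Qed.

Lemma inv_closure_subgroup X : subgroup (inv_closure phi X).
Proof.
split; first by move=> Y sY _ _; apply: subgroup0.
by move=> x y clx cly Y sY iY sXY; apply: subgroupB => //; [apply: clx|apply: cly].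
Qed.

Lemma inv_closure_invariant X : Defs.invariant phi (inv_closure phi X).
Proof. by move=> y cly Y sY iY sXY; apply: (iY); exact: cly Y sY iY sXY. Qed.

Lemma inv_closure_min X Y : subgroup Y -> Defs.invariant phi Y ->
  (forall x, X x -> Y x) -> forall y, inv_closure phi X y -> Y y.
Proof. by move=> sY iY sXY y cly; exact: cly Y sY iY sXY. Qed.

Lemma inv_core_sub X y : inv_core phi X y -> X y.
Proof. by case=> Y [_ _ sYX Yy]; apply: sYX. Qed.

Lemma inv_core_invariant X : Defs.invariant phi (inv_core phi X).
Proof. by move=> y [Y [sY iY sYX Yy]]; exists Y; split=> //; apply: iY. Qed.

(* The core is the sum of all invariant subgroups inside [X], so it is
   closed under subtraction: [Y1 - Y2] is again one of them. *)
Lemma inv_core_subgroup X : subgroup X -> subgroup (inv_core phi X).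
Proof.
move=> sX; split.
  exists (fun y => y = 0); split=> //.
  - by split=> // x y -> ->; rewrite subr0.
  - by move=> y ->; rewrite raddf0.
  - by move=> y ->; apply: subgroup0.
move=> x y [Y1 [sY1 iY1 sY1X Y1x]] [Y2 [sY2 iY2 sY2X Y2y]].
exists (sumg Y1 (fun z => Y2 (- z))); split.
- apply: sumg_subgroup => //; split; first by rewrite oppr0; apply: subgroup0.
  by move=> u v Y2u Y2v; rewrite opprD; apply: subgroupB.
- by apply: sumg_invariant => // z Y2z; rewrite -raddfN; apply: iY2.
- move=> _ [u [v [Y1u [Y2v ->]]]]; rewrite -[v]opprK.
  by apply: subgroupB => //; [apply: sY1X|apply: sY2X].
- by exists x, (- y); split=> //; rewrite opprK.
Qed.

Lemma inv_core_iter X l y : inv_core phi X y -> X (iter l phi y).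
Proof.
by move=> Xy; apply: inv_core_sub; elim: l => [|l IH] //=; apply: inv_core_invariant.
Qed.

Lemma inertial_of_core_finite :
  (forall X, subgroup X -> quot_finite X (inv_core phi X)) -> inertial phi.
Proof.
move=> core_fin X sX; have [N XN] := core_fin X sX; exists N.
apply: (quot_card_le_transfer (R := fun y x => X (y - phi x)) XN).
  move=> _ [_ [x' [[x [Xx ->]] [Xx' ->]]]]; exists x; split => //.
  by rewrite addrC addKr.
move=> y y' x x' Xyx Xyx' core_xx'.
rewrite -(subB_subB_add y y' (phi x) (phi x')) -raddfB.
apply: subgroupD => //; first exact: subgroupB.
by apply: inv_core_sub; apply: inv_core_invariant.
Qed.

End Invariance.

Section CyclicSpan.
Variable A : zmodType.
Variable phi : {additive A -> A}.
Variable a : A.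

Definition apow i := iter i phi a.

Definition lincomb d (c : nat -> int) : A := \sum_(i < d) apow i *~ c i.

Definition cyclic_span y := exists d c, y = lincomb d c.

Lemma lincomb0 c : lincomb 0 c = 0. Proof. by rewrite /lincomb big_ord0. Qed.

Lemma lincombS d c : lincomb d.+1 c = lincomb d c + apow d *~ c d.
Proof. by rewrite /lincomb big_ord_recr. Qed.

Lemma eq_lincomb d c c' : (forall i, (i < d)%N -> c i = c' i) -> lincomb d c = lincomb d c'.
Proof.
elim: d => [|d IH] eq_c; first by rewrite !lincomb0.
by rewrite !lincombS IH ?eq_c // => i lt_id; apply: eq_c; apply: ltnW.
Qed.

Lemma lincomb_coef0 d : lincomb d (fun _ => 0) = 0.
Proof. by elim: d => [|d IH]; rewrite ?lincomb0 // lincombS IH mulr0z addr0. Qed.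

Lemma lincombB d c c' : lincomb d c - lincomb d c' = lincomb d (fun i => c i - c' i).
Proof.
elim: d => [|d IH]; first by rewrite !lincomb0 subr0.
by rewrite !lincombS -IH mulrzBr opprD addrACA.
Qed.

Lemma lincombD d c c' : lincomb d c + lincomb d c' = lincomb d (fun i => c i + c' i).
Proof.
elim: d => [|d IH]; first by rewrite !lincomb0 addr0.
by rewrite !lincombS -IH mulrzDr addrACA.
Qed.

Lemma lincombMz d c z : lincomb d c *~ z = lincomb d (fun i => c i * z).
Proof.
elim: d => [|d IH]; first by rewrite !lincomb0 mul0rz.
by rewrite !lincombS mulrzDl IH mulrzA.
Qed.

Definition coef_trunc (c : nat -> int) d i := if (i < d)%N then c i else 0.

Lemma lincomb_trunc d e c : (d <= e)%N -> lincomb e (coef_trunc c d) = lincomb d c.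
Proof.
move=> /subnKC <-; elim: (e - d)%N => [|k IH].
  by rewrite addn0; apply: eq_lincomb => i lt_id; rewrite /coef_trunc lt_id.
by rewrite addnS lincombS IH /coef_trunc ltnNge leq_addr /= mulr0z addr0.
Qed.

Definition coef_unit (k i : nat) : int := if i == k then 1 else 0.

Lemma lincomb_unit k d : (k < d)%N -> lincomb d (coef_unit k) = apow k.
Proof.
elim: d => [|d IH] //; rewrite ltnS leq_eqVlt => /orP [/eqP ->|lt_kd].
  rewrite lincombS /coef_unit eqxx mulr1z (_ : lincomb d _ = 0) ?add0r //.
  rewrite -(lincomb_coef0 d); apply: eq_lincomb => i lt_id.
  by rewrite (_ : (i == d) = false) //; apply/negbTE; rewrite neq_ltn lt_id.
rewrite lincombS IH // /coef_unit (_ : (d == k) = false) ?mulr0z ?addr0 //.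
by apply/negbTE; rewrite neq_ltn lt_kd orbT.
Qed.

Definition coef_shift (c : nat -> int) i := if i is i'.+1 then c i' else 0.

Lemma raddf_lincomb d c : phi (lincomb d c) = lincomb d.+1 (coef_shift c).
Proof.
elim: d => [|d IH]; first by rewrite lincomb0 raddf0 lincombS lincomb0 /= mulr0z addr0.
by rewrite lincombS raddfD IH raddfMz [in RHS]lincombS.
Qed.

Lemma cyclic_span_subgroup : subgroup cyclic_span.
Proof.
split; first by exists 0%N, (fun _ => 0); rewrite lincomb0.
move=> _ _ [d [c ->]] [d' [c' ->]].
exists (maxn d d'), (fun i => coef_trunc c d i - coef_trunc c' d' i).
by rewrite -lincombB !lincomb_trunc ?leq_maxl ?leq_maxr.
Qed.

Lemma cyclic_span_invariant : Defs.invariant phi cyclic_span.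
Proof. by move=> _ [d [c ->]]; exists d.+1, (coef_shift c); rewrite raddf_lincomb. Qed.

Lemma cyclic_span_apow i : cyclic_span (apow i).
Proof. by exists i.+1, (coef_unit i); rewrite lincomb_unit. Qed.

Lemma cyclic_spanMz t z : cyclic_span t -> cyclic_span (t *~ z).
Proof. by apply: subgroupMz; apply: cyclic_span_subgroup. Qed.

Lemma lincomb_subgroup Y d c : subgroup Y ->
  (forall i, (i < d)%N -> Y (apow i)) -> Y (lincomb d c).
Proof.
move=> sY Yapow; apply: (subgroup_sum (F := fun i => apow i *~ c i)) => // i lt_id.
by apply: subgroupMz => //; apply: Yapow.
Qed.

Lemma cyclic_span_min Y : subgroup Y -> Defs.invariant phi Y -> Y a ->
  forall y, cyclic_span y -> Y y.
Proof.
move=> sY iY Ya _ [d [c ->]]; apply: lincomb_subgroup => // i _.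
by elim: i => [|i IH] //=; apply: iY.
Qed.

Lemma inv_closure1_cyclic_span y : inv_closure phi (fun x => x = a) y -> cyclic_span y.
Proof.
move=> cly.
apply: (inv_closure_min (phi := phi) cyclic_span_subgroup cyclic_span_invariant) cly.
move=> x ->.
exact: (cyclic_span_apow 0).
Qed.

Lemma cyclic_span_torsion q y : a *+ q = 0 -> cyclic_span y -> y *+ q = 0.
Proof.
move=> qa; apply: (cyclic_span_min (Y := fun y => y *+ q = 0)) => //.
  split; first by rewrite mul0rn.
  by move=> x z qx qz; rewrite mulrnBl qx qz subr0.
by move=> x qx; rewrite -raddfMn qx raddf0.
Qed.

Fixpoint lincomb_range (q e : nat) : seq A := if e is e'.+1 then
  [seq y + apow e' *~ (j%:Z) | y <- lincomb_range q e', j <- iota 0 q] else [:: 0].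

(* Coefficients only matter modulo the order [q] of [a]. *)
Lemma mem_lincomb_range q e c :
  a *+ q = 0 -> (0 < q)%N -> lincomb e c \in lincomb_range q e.
Proof.
move=> qa q_gt0; elim: e => [|e IH]; first by rewrite lincomb0 /= inE.
rewrite lincombS /=.
have q_neq0 : q%:Z != 0 by rewrite eqz_nat -lt0n.
have -> : apow e *~ c e = apow e *~ (`|(c e %% q%:Z)%Z|%N)%:Z.
  rewrite gez0_abs ?modz_ge0 // {1}(divz_eq (c e) q%:Z) mulrzDr mulrzA.
  rewrite (_ : apow e *~ (c e %/ q)%Z *~ q%:Z = 0) ?add0r //.
  by apply: (cyclic_span_torsion qa); apply: cyclic_spanMz; apply: cyclic_span_apow.
apply: allpairs_f => //; rewrite mem_iota /= add0n.
have : (c e %% q%:Z < q%:Z)%Z by apply: ltz_pmod; rewrite ltz_nat.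
have : (0 <= c e %% q%:Z)%Z by exact: modz_ge0.
lia.
Qed.

Lemma bezout_prime (p : nat) (x : int) : prime p -> ~~ (p%:Z %| x)%Z ->
  exists u v : int, u * x + v * p%:Z = 1.
Proof.
move=> p_pr p_ndvd_x; case: (Bezoutz x p%:Z) => u [v e]; exists u, v; rewrite e /gcdz.
have : coprime p `|x|%N by rewrite prime_coprime // -[p]/(`|p%:Z|%N) -dvdzE.
by rewrite /coprime gcdnC => /eqP ->.
Qed.

Variable p : nat.
Hypothesis p_pr : prime p.

Definition p_multiple y := exists t, cyclic_span t /\ y = t *+ p.

Section Dependent.
Variables (d : nat) (c : nat -> int) (t0 : A).
Hypotheses (p_ndvd_cd : ~~ (p%:Z %| c d)%Z) (span_t0 : cyclic_span t0).
Hypothesis (dep : lincomb d.+1 c = t0 *+ p).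

Definition span_below_mod k y :=
  exists c' t, cyclic_span t /\ y = lincomb d c' + t *+ (p ^ k).

Lemma span_below_mod_subgroup k : subgroup (span_below_mod k).
Proof.
split.
  exists (fun _ => 0), 0; rewrite lincomb_coef0 mul0rn addr0.
  by split=> //; apply: subgroup0; apply: cyclic_span_subgroup.
move=> _ _ [c1 [t1 [span_t1 ->]]] [c2 [t2 [span_t2 ->]]].
exists (fun i => c1 i - c2 i), (t1 - t2); split.
  by apply: subgroupB => //; apply: cyclic_span_subgroup.
by rewrite -lincombB mulrnBl opprD addrACA.
Qed.

(* Solve the dependence relation for [apow d], inverting [c d] modulo [p]. *)
Lemma span_below_mod1_apow : span_below_mod 1 (apow d).
Proof.
have [u [v e]] := bezout_prime p_pr p_ndvd_cd.
have E1 : apow d *~ c d = t0 *+ p - lincomb d c.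
  by rewrite -dep lincombS [lincomb d c + _]addrC addrK.
exists (fun i => c i * (- u)), (t0 *~ u + apow d *~ v); split.
  apply: subgroupD; first exact: cyclic_span_subgroup.
    exact: cyclic_spanMz.
  by apply: cyclic_spanMz; apply: cyclic_span_apow.
have -> : lincomb d (fun i => c i * - u) = - (lincomb d c *~ u).
  by rewrite -lincombMz mulrNz.
have e2 : apow d = (apow d *~ c d) *~ u + (apow d *~ v) *~ p%:Z.
  by rewrite -!mulrzA (mulrC (c d) u) -mulrzDr e mulr1z.
have e3 : (t0 *+ p) *~ u = (t0 *~ u) *+ p.
  by change ((t0 *~ p%:Z) *~ u = (t0 *~ u) *~ p%:Z); rewrite -!mulrzA (mulrC u).
rewrite {1}e2 E1 mulrzBl expn1 mulrnDl e3.
change (t0 *~ u *+ p - lincomb d c *~ u + apow d *~ v *+ p =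
  - (lincomb d c *~ u) + (t0 *~ u *+ p + apow d *~ v *+ p)).
by rewrite addrA (addrC (t0 *~ u *+ p)).
Qed.

Lemma span_below_mod1_invariant : Defs.invariant phi (span_below_mod 1).
Proof.
move=> _ [c' [t [span_t ->]]].
rewrite raddfD raddf_lincomb lincombS raddfMn -addrA [apow d *~ _ + _]addrC addrA.
apply: subgroupD; first exact: span_below_mod_subgroup.
  by exists (coef_shift c'), (phi t); split => //; apply: cyclic_span_invariant.
by apply: subgroupMz; [apply: span_below_mod_subgroup|apply: span_below_mod1_apow].
Qed.

Lemma span_below_mod1_a : span_below_mod 1 a.
Proof.
case: (posnP d) => [d0|d_gt0]; first by have := span_below_mod1_apow; rewrite d0.
exists (coef_unit 0), 0; split; first by apply: subgroup0; apply: cyclic_span_subgroup.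
by rewrite lincomb_unit // mul0rn addr0.
Qed.

Lemma cyclic_span_below_mod k y : cyclic_span y -> span_below_mod k y.
Proof.
elim: k y => [|k IH] y span_y.
  by exists (fun _ => 0), y; split => //; rewrite lincomb_coef0 add0r expn0.
have [c1 [t1 [span_t1 ->]]] := IH y span_y.
have [c2 [t2 [span_t2 ->]]] := cyclic_span_min (span_below_mod_subgroup 1)
  span_below_mod1_invariant span_below_mod1_a span_t1.
exists (fun i => c1 i + c2 i * (p ^ k)%:Z), t2; split => //.
rewrite -lincombD -lincombMz mulrnDl -addrA; congr (_ + _); congr (_ + _).
by rewrite expn1 -mulrnA -expnS.
Qed.

Lemma inv_closure1_finite_dependent : p_group A p ->
  finite_set (inv_closure phi (fun x => x = a)).
Proof.
move=> pA; have [n pna] := pA a.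
have pn_gt0 : (0 < p ^ n)%N by rewrite expn_gt0 prime_gt0.
exists (lincomb_range (p ^ n) d) => y /inv_closure1_cyclic_span span_y.
have [c' [t [span_t ->]]] := cyclic_span_below_mod n span_y.
by rewrite (cyclic_span_torsion pna span_t) addr0; apply: mem_lincomb_range.
Qed.

End Dependent.

Section Independent.
Hypothesis indep : forall d c, ~~ (p%:Z %| c d)%Z -> ~ p_multiple (lincomb d.+1 c).

Lemma dvdz_coef_p_multiple D c :
  p_multiple (lincomb D c) -> forall i, (i < D)%N -> (p%:Z %| c i)%Z.
Proof.
elim: D c => [|D IH] c pmul i //.
have p_dvd_cD : (p%:Z %| c D)%Z.
  by apply: contraT => p_ndvd; case: (indep p_ndvd pmul).
rewrite ltnS leq_eqVlt => /orP [/eqP -> //|lt_iD].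
apply: IH lt_iD; case: pmul => t [span_t et].
have [k ek] := dvdzP p_dvd_cD.
exists (t - apow D *~ k); split.
  apply: subgroupB; [exact: cyclic_span_subgroup|exact: span_t|].
  by apply: cyclic_spanMz; apply: cyclic_span_apow.
have -> : lincomb D c = lincomb D.+1 c - apow D *~ c D by rewrite lincombS addrK.
by rewrite et ek mulrzA mulrnBl.
Qed.

Definition parity_span (par : bool) y := exists D c,
  (forall i, (i < D)%N -> odd i = par -> (p%:Z %| c i)%Z) /\ y = lincomb D c.

Lemma parity_span_subgroup par : subgroup (parity_span par).
Proof.
split; first by exists 0%N, (fun _ => 0); rewrite lincomb0.
move=> _ _ [D [c [dvd_c ->]]] [D' [c' [dvd_c' ->]]].
exists (maxn D D'), (fun i => coef_trunc c D i - coef_trunc c' D' i); split.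
  move=> i _ odd_i; apply: rpredB; rewrite /coef_trunc.
    by case: ifP => lt_iD; [apply: dvd_c|apply: dvdz0].
  by case: ifP => lt_iD'; [apply: dvd_c'|apply: dvdz0].
by rewrite -lincombB !lincomb_trunc ?leq_maxl ?leq_maxr.
Qed.

Lemma parity_span_raddf par x : parity_span par x -> parity_span (~~ par) (phi x).
Proof.
case=> D [c [dvd_c ->]]; exists D.+1, (coef_shift c); split; last by rewrite raddf_lincomb.
case=> [|i] /= lt_iD odd_i; first exact: dvdz0.
by apply: dvd_c => //; rewrite -[par]negbK -odd_i negbK.
Qed.

Lemma parity_span_apow par k : odd k != par -> parity_span par (apow k).
Proof.
move=> odd_k; exists k.+1, (coef_unit k); split; last by rewrite lincomb_unit.
move=> i _ odd_i; rewrite /coef_unit; case: eqP => [e|_]; last exact: dvdz0.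
by move: odd_k; rewrite -odd_i e eqxx.
Qed.

Lemma apow_subB_notin_parity_span par k l :
  odd k = par -> l != k -> ~ parity_span par (apow k - apow l).
Proof.
move=> odd_k neq_lk [D [c [dvd_c e]]].
set E := maxn D (maxn k l).+1.
have lt_kE : (k < E)%N by rewrite /E; lia.
have lt_lE : (l < E)%N by rewrite /E; lia.
have pmul0 :
    p_multiple (lincomb E (fun i => coef_trunc c D i - coef_unit k i + coef_unit l i)).
  exists 0; split; first by apply: subgroup0; apply: cyclic_span_subgroup.
  rewrite -lincombD -lincombB lincomb_trunc ?leq_maxl // !lincomb_unit // -e.
  by rewrite mul0rn [apow k - apow l]addrC addrK addNr.
have := dvdz_coef_p_multiple pmul0 lt_kE.
rewrite /coef_unit eqxx eq_sym (negbTE neq_lk) addr0 => p_dvd.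
have p_dvd_trunc : (p%:Z %| coef_trunc c D k)%Z.
  by rewrite /coef_trunc; case: ifP => lt_kD; [apply: dvd_c|apply: dvdz0].
have := rpredB p_dvd_trunc p_dvd; rewrite subKr.
by rewrite dvdz1 /= => /eqP p1; move: p_pr; rewrite p1.
Qed.

Lemma not_inertial_independent : ~ inertial phi.
Proof.
move=> inert; have [N HN] := inert _ (parity_span_subgroup true).
suff : (N.+1 <= N)%N by rewrite ltnn.
apply: (HN N.+1 (fun i => apow i.*2.+1)).
  move=> i _; exists (phi (apow i.*2)), 0; split.
    by exists (apow i.*2); split => //; apply: parity_span_apow; rewrite odd_double.
  by split; [apply: subgroup0; apply: parity_span_subgroup | rewrite addr0].
move=> i j _ _ span_ij; case: (eqVneq i j) => // neq_ij; exfalso.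
apply: (apow_subB_notin_parity_span (par := true) (k := i.*2.+1) (l := j.*2.+1)) => //=.
  by rewrite odd_double.
by rewrite eqSS -!muln2 eqn_pmul2r // eq_sym.
Qed.

Lemma not_left_inertial_independent : ~ left_inertial phi.
Proof.
move=> linert; have [N HN] := linert _ (parity_span_subgroup true).
suff : (N.+1 <= N)%N by rewrite ltnn.
apply: (HN N.+1 (fun i => apow i.*2)).
  by move=> i _; apply: parity_span_apow; rewrite odd_double.
move=> i j _ _ [_ [x [span_x e]]]; case: (eqVneq i j) => // neq_ij; exfalso.
have := parity_span_raddf span_x; rewrite -e /=.
apply: apow_subB_notin_parity_span; first by rewrite odd_double.
by rewrite -!muln2 eqn_pmul2r // eq_sym.
Qed.

End Independent.

Lemma inv_closure1_finite : p_group A p -> inertial phi \/ left_inertial phi ->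
  finite_set (inv_closure phi (fun x => x = a)).
Proof.
move=> pA inert.
case: (classic (exists d c, ~~ (p%:Z %| c d)%Z /\ p_multiple (lincomb d.+1 c))).
  by move=> [d [c [p_ndvd [t [span_t dep]]]]]; exact: inv_closure1_finite_dependent dep pA.
move=> nodep; exfalso.
have indep d c : ~~ (p%:Z %| c d)%Z -> ~ p_multiple (lincomb d.+1 c).
  by move=> p_ndvd pmul; apply: nodep; exists d, c.
by case: inert; [apply: not_inertial_independent | apply: not_left_inertial_independent].
Qed.

End CyclicSpan.

Section FiniteClosure.
Variable A : zmodType.
Variable phi : {additive A -> A}.

Fixpoint sum_inv_closures (rs : seq A) : A -> Prop :=
  if rs is r :: rs' then sumg (inv_closure phi (fun x => x = r)) (sum_inv_closures rs')
  else fun y => y = 0.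

Lemma sum_inv_closures_subgroup rs : subgroup (sum_inv_closures rs).
Proof.
elim: rs => [|r rs IH] /=; last by apply: sumg_subgroup => //; apply: inv_closure_subgroup.
by split => // x y -> ->; rewrite subr0.
Qed.

Lemma sum_inv_closures_invariant rs : Defs.invariant phi (sum_inv_closures rs).
Proof.
elim: rs => [|r rs IH] /=; last by apply: sumg_invariant => //; apply: inv_closure_invariant.
by move=> y ->; rewrite raddf0.
Qed.

Lemma sum_inv_closures_mem rs r : r \in rs -> sum_inv_closures rs r.
Proof.
elim: rs => [|r' rs IH] //=; rewrite in_cons => /orP [/eqP ->|rs_r].
  exists r', 0; split; first exact: inv_closure_sub.
  by split; [apply: subgroup0; apply: sum_inv_closures_subgroup|rewrite addr0].
exists 0, r; split; first by apply: subgroup0; apply: inv_closure_subgroup.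
by split; [apply: IH|rewrite add0r].
Qed.

Lemma sum_inv_closures_finite rs :
  (forall r, finite_set (inv_closure phi (fun x => x = r))) ->
  finite_set (sum_inv_closures rs).
Proof.
move=> fin; elim: rs => [|r rs IH] /=; last exact: finite_sumg.
by exists [:: 0] => y ->; rewrite inE.
Qed.

Lemma inv_closure_quot_finite p : prime p -> p_group A p ->
  (forall X, subgroup X -> quot_finite X (inv_core phi X)) ->
  forall X, subgroup X -> quot_finite (inv_closure phi X) X.
Proof.
move=> p_pr pA core_fin X sX.
have [N XN] := core_fin X sX.
have [L [_ _ coverL]] := exists_transversal (inv_core_subgroup phi sX) XN.
have fin r : finite_set (inv_closure phi (fun x => x = r)).
  by apply: inv_closure1_finite p_pr pA _; left; apply: inertial_of_core_finite.
have [s Ss] := sum_inv_closures_finite L fin.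
have cl_sub z : inv_closure phi X z -> sumg (inv_core phi X) (sum_inv_closures L) z.
  apply: inv_closure_min.
  - by apply: sumg_subgroup; [apply: inv_core_subgroup|apply: sum_inv_closures_subgroup].
  - by apply: sumg_invariant; [apply: inv_core_invariant|apply: sum_inv_closures_invariant].
  - move=> x Xx; have [w Lw core_xw] := coverL x Xx.
    by exists (x - w), w; split => //; split; [apply: sum_inv_closures_mem|rewrite subrK].
exists (size s); apply: quot_card_le_cover => // z clz.
have [u [w [core_u [Lw ->]]]] := cl_sub z clz.
by exists w; [apply: Ss | rewrite addrK; apply: inv_core_sub core_u].
Qed.

End FiniteClosure.

Lemma iter_lincomb (A : zmodType) (phi : {additive A -> A}) x n d c :
  iter n phi (lincomb phi x d c) = lincomb phi (iter n phi x) d c.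
Proof.
elim: d => [|d IH]; first by rewrite !lincomb0 iter_raddf0.
by rewrite !lincombS iter_raddfD iter_raddfMz IH /apow -!iterD addnC.
Qed.

Lemma subgroupMz_coprime (A : zmodType) p (S : A -> Prop) y (z : int) :
  p_group A p -> subgroup S -> coprime `|z| p -> S (y *~ z) -> S y.
Proof.
move=> pA sS co_zp Syz.
have [n pny] := pA y.
have /coprimezP [[u v] /= e] : coprimez z (p ^ n)%:Z.
  by rewrite coprimezE /= coprimeXr.
have -> : y = (y *~ z) *~ u + (y *~ (p ^ n)%:Z) *~ v.
  by rewrite -!mulrzA (mulrC z u) (mulrC _ v) -mulrzDr e mulr1z.
have -> : y *~ (p ^ n)%:Z = 0 by exact: pny.
by rewrite mul0rz addr0; apply: subgroupMz.
Qed.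

Lemma eq_of_digits (q K i j : nat) : (1 < q)%N -> (i < q ^ K)%N -> (j < q ^ K)%N ->
  (forall t, (t < K)%N -> i %/ q ^ t %% q = j %/ q ^ t %% q)%N -> i = j.
Proof.
move=> q_gt1; elim: K i j => [|K IH] i j.
  by rewrite expn0 !ltnS !leqn0 => /eqP -> /eqP ->.
move=> lt_i lt_j eq_dig; have q_gt0 : (0 < q)%N by lia.
rewrite (divn_eq i q) (divn_eq j q).
have := eq_dig 0%N isT; rewrite expn0 !divn1 => ->.
congr (_ * _ + _)%N; apply: IH.
- by rewrite ltn_divLR // -expnSr.
- by rewrite ltn_divLR // -expnSr.
- by move=> t lt_tK; rewrite -!divnMA -expnS; apply: eq_dig.
Qed.

Section InvariantChain.
Variable A : zmodType.
Variable phi : {additive A -> A}.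
Implicit Types X Y : A -> Prop.

Fixpoint inv_chain X k : A -> Prop :=
  if k is k'.+1 then sumg X (img phi (inv_chain X k')) else X.

Variable X : A -> Prop.
Hypothesis sX : subgroup X.

Lemma inv_chain_subgroup k : subgroup (inv_chain X k).
Proof. by elim: k => [|k IH] //=; apply: sumg_subgroup => //; apply: img_subgroup. Qed.

Lemma inv_chain_sub k x : X x -> inv_chain X k x.
Proof.
case: k => [|k] //= Xx; exists x, 0; split => //; split; last by rewrite addr0.
by exists 0; split; [apply: subgroup0; apply: inv_chain_subgroup|rewrite raddf0].
Qed.

Lemma inv_chainS k y : inv_chain X k y -> inv_chain X k.+1 y.
Proof.
elim: k y => [|k IH] y /=; first exact: (inv_chain_sub 1).
move=> [x [_ [Xx [[z [chain_z ->]] ->]]]]; exists x, (phi z); split => //; split => //.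
by exists z; split => //; apply: IH.
Qed.

Lemma inv_chain_le k l y : (k <= l)%N -> inv_chain X k y -> inv_chain X l y.
Proof.
move=> /subnKC <-; elim: (l - k)%N => [|j IH] chain_y; first by rewrite addn0.
by rewrite addnS; apply: inv_chainS; apply: IH.
Qed.

Lemma inv_chain_iter k j x : X x -> (j <= k)%N -> inv_chain X k (iter j phi x).
Proof.
move=> Xx le_jk; apply: inv_chain_le le_jk _; elim: j => [|j IH] //=.
exists 0, (phi (iter j phi x)); split; first exact: subgroup0.
by split; [exists (iter j phi x)|rewrite add0r].
Qed.

Lemma inv_chain_decomp k y : inv_chain X k.+1 y ->
  exists x, X x /\ inv_chain X k (y - iter k.+1 phi x).
Proof.
elim: k y => [|k IH] y [x0 [_ [Xx0 [[z [chain_z ->]] ->]]]].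
  by exists z; split => //=; rewrite addrK.
have [x [Xx chain_zx]] := IH z chain_z.
exists x; split => //; exists x0, (phi (z - iter k.+1 phi x)); split => //.
split; first by exists (z - iter k.+1 phi x).
by rewrite raddfB addrA.
Qed.

(* [x |-> phi^(k+1) x + X_k] maps [X] onto [X_(k+1) / X_k] and kills the core. *)
Lemma inv_chain_step_bound N k : quot_card_le X (inv_core phi X) N ->
  quot_card_le (inv_chain X k.+1) (inv_chain X k) N.
Proof.
move=> XN.
apply: (quot_card_le_transfer (R := fun y x => inv_chain X k (y - iter k.+1 phi x)) XN).
  by move=> y; apply: inv_chain_decomp.
move=> y y' x x' chain_yx chain_yx' core_xx'.
rewrite -(subB_subB_add y y' (iter k.+1 phi x) (iter k.+1 phi x')) -iter_raddfB.
apply: subgroupD; first exact: inv_chain_subgroup.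
  by apply: subgroupB => //; apply: inv_chain_subgroup.
by apply: inv_chain_sub; apply: inv_core_iter.
Qed.

Lemma inv_chain_bound N k : quot_card_le X (inv_core phi X) N ->
  quot_card_le (inv_chain X k) X (N ^ k).
Proof.
move=> XN; elim: k => [|k IH].
  rewrite expn0 (_ : 1%N = size [:: (0 : A)]) //.
  by apply: quot_card_le_cover => // z Xz; exists 0; rewrite ?inE // subr0.
rewrite expnS; apply: quot_card_le_mul (inv_chain_subgroup k) sX _ IH.
exact: inv_chain_step_bound.
Qed.

Lemma inv_chain_escape k j y : inv_chain X k y ->
  ~ inv_chain X (k + j) (iter j.+1 phi y) ->
  exists x, X x /\ ~ inv_chain X (k + j) (iter (k + j).+1 phi x).
Proof.
elim: k j y => [|k IH] j y; first by move=> Xy out_y; exists y.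
move=> [x0 [_ [Xx0 [[z [chain_z ->]] ->]]]] out_y.
have := IH j.+1 z chain_z; rewrite !addSnnS; apply.
move=> chain_z'; apply: out_y; rewrite iter_raddfD.
apply: subgroupD; first exact: inv_chain_subgroup.
  by apply: inv_chain_iter => //; rewrite ltnS leq_addl.
by rewrite -iterSr addSnnS.
Qed.

Variable p : nat.
Hypotheses (p_pr : prime p) (pA : p_group A p).

Section Escape.
Variables (m : nat) (x : A).
Hypotheses (Xx : X x) (out_x : ~ inv_chain X m (iter m.+1 phi x)).

(* Applying [phi^(m-K+1)] pushes every term but the top one into [X_m], while
   the top one is [phi^(m+1) x] times a unit modulo [p]. *)
Lemma core_lincomb_coef0 K d : (K <= m.+1)%N ->
  (forall t, d t != 0 -> (`|d t| < p)%N) ->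
  inv_core phi (inv_chain X m) (lincomb phi x K d) -> forall t, (t < K)%N -> d t = 0.
Proof.
elim: K => [|K IH] // le_Km small_d core_K.
have dK0 : d K = 0.
  case: (eqVneq (d K) 0) => // dK_neq0; case: out_x.
  apply: (subgroupMz_coprime pA (inv_chain_subgroup _) (z := d K)).
    rewrite coprime_sym prime_coprime //; apply/negP => /dvdn_leq.
    by rewrite absz_gt0 dK_neq0 => /(_ isT); have := small_d _ dK_neq0; lia.
  have core_it := inv_core_iter (m - K).+1 core_K.
  rewrite lincombS iter_raddfD iter_raddfMz iter_lincomb in core_it.
  have chain_low : inv_chain X m (lincomb phi (iter (m - K).+1 phi x) K d).
    apply: lincomb_subgroup; first exact: inv_chain_subgroup.
    by move=> t lt_tK; rewrite /apow -iterD; apply: inv_chain_iter => //; lia.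
  have := subgroupB (inv_chain_subgroup _) core_it chain_low.
  by rewrite addrC addKr /apow -iterD; have -> : ((m - K).+1 + K = m.+1)%N by lia.
move=> t; rewrite ltnS leq_eqVlt => /orP [/eqP -> //|lt_tK].
apply: IH => //; first exact: ltnW.
by rewrite lincombS dK0 mulr0z addr0 in core_K.
Qed.

Lemma inv_chain_escape_card :
  ~ quot_card_le (inv_chain X m) (inv_core phi (inv_chain X m)) (p ^ m).
Proof.
move=> chain_card; have p_gt1 : (1 < p)%N by apply: prime_gt1.
suff : (p ^ m.+1 <= p ^ m)%N by rewrite leqNgt ltn_exp2l // ltnSn.
pose digit i t := (i %/ p ^ t %% p)%N%:Z.
apply: (chain_card _ (fun i => lincomb phi x m.+1 (digit i))).
  move=> i _; apply: lincomb_subgroup; first exact: inv_chain_subgroup.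
  by move=> t lt_tm; apply: inv_chain_iter => //; lia.
move=> i j lt_i lt_j core_ij; rewrite lincombB in core_ij.
apply: (eq_of_digits p_gt1 lt_i lt_j) => t lt_tm.
have small t' : digit i t' - digit j t' != 0 -> (`|digit i t' - digit j t'| < p)%N.
  move=> _; have := ltn_pmod (i %/ p ^ t') (ltnW p_gt1).
  have := ltn_pmod (j %/ p ^ t') (ltnW p_gt1); rewrite /digit; lia.
have := core_lincomb_coef0 (leqnn _) small core_ij lt_tm.
by move/eqP; rewrite subr_eq0 => /eqP [].
Qed.

End Escape.

Lemma inv_chain_invariant m :
  quot_card_le (inv_chain X m) (inv_core phi (inv_chain X m)) (p ^ m) ->
  Defs.invariant phi (inv_chain X m).
Proof.
move=> chain_card y chain_y; apply: NNPP => out_y.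
have out_y0 : ~ inv_chain X (m + 0) (iter 1 phi y) by rewrite addn0.
have [x [Xx out_x]] := inv_chain_escape chain_y out_y0.
by rewrite addn0 in out_x; exact: inv_chain_escape_card Xx out_x chain_card.
Qed.

Lemma inv_closure_quot_card_le m :
  (forall Y, subgroup Y -> quot_card_le Y (inv_core phi Y) (p ^ m)) ->
  quot_card_le (inv_closure phi X) X (p ^ (m ^ 2)).
Proof.
move=> core_card.
apply: (quot_card_le_sub (Z := inv_chain X m)).
  apply: inv_closure_min; first exact: inv_chain_subgroup.
    by apply: inv_chain_invariant; apply: core_card; apply: inv_chain_subgroup.
  exact: inv_chain_sub.
by rewrite -mulnn expnM; apply: inv_chain_bound; apply: core_card.
Qed.

End InvariantChain.

Theorem lemma3p3 (p : nat) (A : zmodType) (phi : {additive A -> A}) :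
  prime p -> p_group A p ->
  [/\ (inertial phi \/ left_inertial phi) ->
        forall a : A, finite_set (inv_closure phi (fun x => x = a)),
      (forall X, subgroup X -> quot_finite X (inv_core phi X)) ->
        forall X, subgroup X -> quot_finite (inv_closure phi X) X
    & forall m : nat,
        (forall X, subgroup X -> quot_card_le X (inv_core phi X) (p ^ m)) ->
        forall X, subgroup X -> quot_card_le (inv_closure phi X) X (p ^ (m ^ 2))].
Proof.
move=> p_pr pA; split.
- by move=> inert a; exact: inv_closure1_finite p_pr pA inert.
- exact: inv_closure_quot_finite p_pr pA.
- by move=> m core_card X sX; exact (inv_closure_quot_card_le sX p_pr pA core_card).
Qed.
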